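(* Consider particles indexed by $x\in[0,1]$ with trajectories $y(t,x)$ solving $\frac{d^2y}{dt^2}=F(y)$, $y(0,x)=x$, $\frac{dy}{dt}(0,x)=v(x)$, where $v$ is a $C^1$ function on $[0,1]$. Say there are no collisions if $y(t,x)\ne y(t,x')$ for all $t\ge0$ and all $x\ne x'$ in $[0,1]$. 1) (one gap) Let $F_1>0$, $F_2\ge0$, $A>1$, and $F(x)=F_1$ for $0\le x<A$, $F(x)=F_2$ for $x\ge A$. If $v(x)=0$ for all $x\in[0,1]$, then there are no collisions if and only if $F_2\ge F_1$. If $v(x)\ge0$ for all $x\in[0,1]$, then there are no collisions if and only if for all $x\in[0,1]$ both $$-2(A-x)v'(x)<v(x)+\sqrt{D(x)}\quad\text{and}\quad v'(x)\big((F_1-F_2)v(x)+F_2\sqrt{D(x)}\big)\ge F_1(F_1-F_2)$$ hold, where $D(x)=v^2(x)+2F_1(A-x)$. 2) (two gaps) Let $v(x)=0$ for all $x\in[0,1]$, let $0<F_2<F_1$, $F_2<F_3$, $1<A<B$, and $F(x)=F_1$ for $0\le x<A$, $F(x)=F_2$ for $x\in[A,B)$, $F(x)=F_3$ for $x\ge B$. Then there are no collisions if and only if $$B-A\le\alpha(A-1),\qquad \alpha=\frac{F_1(F_3-F_1)\big(F_3(F_1-F_2)+F_1(F_3-F_2)\big)}{(F_1-F_2)^2F_3^2}.$$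
   Context: One-dimensional continuum of non-interacting unit-mass point particles, each $x\in[0,1]$ starting at position $x$ with velocity $v(x)$ and moving under the piecewise constant external force $F$. *)

From Stdlib Require Import Reals.
From Coquelicot Require Import Coquelicot.
Open Scope R_scope.

(* Piecewise constant force with one gap: F1 on [0,A), F2 on [A,oo).
   (Values left of 0 are irrelevant: particles start in [0,1] and move right.) *)
Definition F_one_gap (F1 F2 A : R) (z : R) : R :=
  if Rlt_dec z A then F1 else F2.

Definition F_two_gaps (F1 F2 F3 A B : R) (z : R) : R :=
  if Rlt_dec z A then F1 else if Rlt_dec z B then F2 else F3.

(* Trajectory in the (Caratheodory / integral) sense, appropriate for a
   discontinuous force: there is a velocity field w with
     w(t,x) = v(x) + int_0^t F(y(s,x)) ds,   y(t,x) = x + int_0^t w(s,x) ds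
   for all t >= 0 and x in [0,1]; i.e. y(.,x) is C^1, y(0,x)=x,
   dy/dt(0,x)=v(x), and d^2y/dt^2 = F(y) (wherever F(y) is continuous). *)
Definition is_trajectory (F : R -> R) (v : R -> R) (y : R -> R -> R) : Prop :=
  exists w : R -> R -> R,
    forall x, 0 <= x <= 1 -> forall t, 0 <= t ->
      is_RInt (fun s => F (y s x)) 0 t (w t x - v x) /\
      is_RInt (fun s => w s x) 0 t (y t x - x).

Definition no_collisions (y : R -> R -> R) : Prop :=
  forall t, 0 <= t -> forall x x', 0 <= x <= 1 -> 0 <= x' <= 1 -> x <> x' ->
    y t x <> y t x'.

Definition Dfun (F1 A : R) (v : R -> R) (x : R) : R := (v x)^2 + 2 * F1 * (A - x).

Definition alpha (F1 F2 F3 : R) : R :=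
  F1 * (F3 - F1) * (F3 * (F1 - F2) + F1 * (F3 - F2)) / ((F1 - F2)^2 * F3^2).

(* Between the levels where the force jumps, each particle is uniformly
   accelerated, so [y t x] is an explicit piecewise quadratic function of [t]
   whose pieces join at the arrival times at the levels.  The force is
   nonnegative, so particles never turn back, and eventually all of them move
   in the last layer, where the stretch [dy/dx] is affine in [t] with a slope
   (the rate) computed from the arrival data.  A negative rate at some
   particle reverses the order of nearby particles at a late time, and the
   intermediate value theorem gives a collision.  A nonnegative rate everywhere
   makes the stretch positive in every phase, so [y t] is strictly increasing.
   The stated inequalities are the explicit forms of "rate >= 0" (one gap),
   resp. of this condition at the most restrictive particle x = 1 (two gaps). *)

From Stdlib Require Import Reals Lra.
From Coquelicot Require Import Coquelicot.
Open Scope R_scope.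

Lemma Rmult_pos_cancel_l a b : 0 < a -> (0 < a * b <-> 0 < b).
Proof.
  intros Ha. split; intros H; [|apply Rmult_lt_0_compat; assumption].
  apply (Rmult_lt_reg_l a); lra.
Qed.

Lemma Rmult_nonneg_cancel_l a b : 0 < a -> (0 <= a * b <-> 0 <= b).
Proof.
  intros Ha. split; intros H; [|apply Rmult_le_pos; lra].
  apply (Rmult_le_reg_l a); lra.
Qed.

Lemma is_RInt_value_unique (f : R -> R) a b l1 l2 :
  is_RInt f a b l1 -> is_RInt f a b l2 -> l1 = l2.
Proof.
  intros H1 H2. now rewrite <- (is_RInt_unique _ _ _ _ H1), <- (is_RInt_unique _ _ _ _ H2).
Qed.

Lemma is_RInt_point_value (f : R -> R) a l : is_RInt f a a l -> l = 0.
Proof. intros H. exact (is_RInt_value_unique f a a l 0 H (is_RInt_point f a)). Qed.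

Lemma is_RInt_increment (f : R -> R) a s t Is It :
  is_RInt f a s Is -> is_RInt f a t It -> is_RInt f s t (It - Is).
Proof.
  intros Hs Ht. replace (It - Is) with (plus (opp Is) It) by (cbn; ring).
  exact (is_RInt_Chasles f s a t _ _ (is_RInt_swap f s a Is Hs) Ht).
Qed.

Lemma is_RInt_const_R (c a b : R) : is_RInt (fun _ => c) a b (c * (b - a)).
Proof.
  replace (c * (b - a)) with (scal (b - a) c) by (cbn; unfold mult; cbn; ring).
  apply (@is_RInt_const R_NormedModule).
Qed.

(** * Uniform motion *)

Definition uniform_motion (y0 w0 t0 f t : R) : R :=
  y0 + w0 * (t - t0) + f * (t - t0) ^ 2 / 2.

Lemma uniform_motion_start y0 w0 t0 f : uniform_motion y0 w0 t0 f t0 = y0.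
Proof. unfold uniform_motion. field. Qed.

Lemma is_RInt_affine (w0 f t0 t : R) :
  is_RInt (fun r => w0 + f * (r - t0)) t0 t (uniform_motion 0 w0 t0 f t).
Proof.
  assert (H : is_RInt (fun r => w0 + f * (r - t0)) t0 t
     (minus (uniform_motion 0 w0 t0 f t) (uniform_motion 0 w0 t0 f t0))).
  { apply (is_RInt_derive (fun r => uniform_motion 0 w0 t0 f r)).
    - intros r _. unfold uniform_motion. auto_derive; [exact I | field].
    - intros r _. apply (ex_derive_continuous (fun r => w0 + f * (r - t0))).
      auto_derive. exact I. }
  unfold minus, plus, opp in H; simpl in H.
  rewrite uniform_motion_start, Ropp_0, Rplus_0_r in H. exact H.
Qed.

Lemma uniform_motion_mono y0 w0 t0 f s t :
  0 <= w0 -> 0 <= f -> t0 <= s <= t ->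
  uniform_motion y0 w0 t0 f s <= uniform_motion y0 w0 t0 f t.
Proof.
  intros Hw Hf Hst. unfold uniform_motion.
  assert (0 <= (t - s) * (w0 + f * ((t - t0) + (s - t0)) / 2)) by (apply Rmult_le_pos; nra).
  nra.
Qed.

Lemma uniform_motion_gt_start y0 w0 t0 f t :
  0 < w0 -> 0 <= f -> t0 < t -> y0 < uniform_motion y0 w0 t0 f t.
Proof.
  intros Hw Hf Ht. unfold uniform_motion.
  assert (0 < w0 * (t - t0)) by (apply Rmult_lt_0_compat; lra).
  assert (0 <= f * (t - t0) ^ 2) by (apply Rmult_le_pos; [lra | apply pow2_ge_0]).
  lra.
Qed.

(* A particle entering a layer of width [d] with speed [w] under the force [f]
   leaves it with speed [exit_speed f w d] after the time [crossing_time f w d]. *)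
Definition exit_speed (f w d : R) : R := sqrt (w ^ 2 + 2 * f * d).

Definition crossing_time (f w d : R) : R := (exit_speed f w d - w) / f.

Section Layer.
Variables (f w d : R).
Hypotheses (f_pos : 0 < f) (w_nonneg : 0 <= w) (d_pos : 0 < d).

Lemma exit_speed_sq : exit_speed f w d ^ 2 = w ^ 2 + 2 * f * d.
Proof. unfold exit_speed. rewrite pow2_sqrt; [reflexivity | nra]. Qed.

Lemma exit_speed_gt : w < exit_speed f w d.
Proof.
  pose proof exit_speed_sq. pose proof (sqrt_pos (w ^ 2 + 2 * f * d)).
  unfold exit_speed in *. nra.
Qed.

Lemma crossing_time_pos : 0 < crossing_time f w d.
Proof. unfold crossing_time. pose proof exit_speed_gt. apply Rdiv_lt_0_compat; lra. Qed.

Lemma exit_velocity : w + f * crossing_time f w d = exit_speed f w d.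
Proof. unfold crossing_time. field. lra. Qed.

Lemma uniform_motion_crossing a t0 :
  uniform_motion a w t0 f (t0 + crossing_time f w d) = a + d.
Proof.
  pose proof exit_speed_sq as Hsq. pose proof exit_velocity as Hvel.
  set (T := crossing_time f w d) in *. set (E := exit_speed f w d) in *.
  unfold uniform_motion. replace (t0 + T - t0) with T by ring.
  apply Rmult_eq_reg_l with (2 * f); [|lra].
  replace (2 * f * (a + w * T + f * T ^ 2 / 2)) with (2 * f * a + (w + f * T) ^ 2 - w ^ 2)
    by field.
  rewrite Hvel, Hsq. ring.
Qed.

Lemma uniform_motion_lt_crossing a t0 s :
  t0 <= s < t0 + crossing_time f w d -> uniform_motion a w t0 f s < a + d.
Proof.
  intros Hs. rewrite <- (uniform_motion_crossing a t0). unfold uniform_motion.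
  set (T := t0 + crossing_time f w d) in *.
  assert (0 < (T - s) * (w + f * ((T - t0) + (s - t0)) / 2)) by (apply Rmult_lt_0_compat; nra).
  nra.
Qed.

End Layer.

(** * Trajectories under a nonnegative force *)

Definition trajectory_from (F : R -> R) (x0 v0 : R) (Y W : R -> R) : Prop :=
  forall t, 0 <= t ->
    is_RInt (fun s => F (Y s)) 0 t (W t - v0) /\ is_RInt W 0 t (Y t - x0).

Section Trajectory.
Variables (F : R -> R) (x0 v0 : R) (Y W : R -> R).
Hypotheses (F_nonneg : forall z, 0 <= F z) (v0_nonneg : 0 <= v0).
Hypothesis YW_trajectory : trajectory_from F x0 v0 Y W.

Lemma trajectory_start : Y 0 = x0 /\ W 0 = v0.
Proof.
  destruct (YW_trajectory 0 (Rle_refl 0)) as [HW HY].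
  apply is_RInt_point_value in HW, HY. lra.
Qed.

Lemma velocity_increment s t :
  0 <= s -> 0 <= t -> is_RInt (fun r => F (Y r)) s t (W t - W s).
Proof.
  intros Hs Ht. replace (W t - W s) with ((W t - v0) - (W s - v0)) by ring.
  apply is_RInt_increment with 0; apply YW_trajectory; assumption.
Qed.

Lemma position_increment s t : 0 <= s -> 0 <= t -> is_RInt W s t (Y t - Y s).
Proof.
  intros Hs Ht. replace (Y t - Y s) with ((Y t - x0) - (Y s - x0)) by ring.
  apply is_RInt_increment with 0; apply YW_trajectory; assumption.
Qed.

Lemma velocity_nondecreasing s t : 0 <= s <= t -> W s <= W t.
Proof.
  intros Hst. assert (0 <= W t - W s); [|lra].
  apply (is_RInt_ge_0 (fun r => F (Y r)) s t); [lra | apply velocity_increment; lra |].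
  intros; apply F_nonneg.
Qed.

Lemma velocity_nonneg t : 0 <= t -> 0 <= W t.
Proof.
  intros Ht. destruct trajectory_start as [_ W0].
  pose proof (velocity_nondecreasing 0 t). lra.
Qed.

Lemma position_nondecreasing s t : 0 <= s <= t -> Y s <= Y t.
Proof.
  intros Hst. assert (0 <= Y t - Y s); [|lra].
  apply (is_RInt_ge_0 W s t); [lra | apply position_increment; lra |].
  intros r Hr. apply velocity_nonneg; lra.
Qed.

Lemma position_le_linear s t : 0 <= s <= t -> Y t <= Y s + W t * (t - s).
Proof.
  intros Hst. assert (Y t - Y s <= W t * (t - s)); [|lra].
  apply (is_RInt_le W (fun _ => W t) s t);
    [lra | apply position_increment; lra | apply is_RInt_const_R |].
  intros r Hr. apply velocity_nondecreasing; lra.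
Qed.

Lemma motion_under_constant_force f t0 t1 :
  0 <= t0 <= t1 -> (forall r, t0 < r < t1 -> F (Y r) = f) ->
  W t1 = W t0 + f * (t1 - t0) /\ Y t1 = uniform_motion (Y t0) (W t0) t0 f t1.
Proof.
  intros Ht Hf.
  assert (HW : forall r, t0 <= r <= t1 -> W r = W t0 + f * (r - t0)).
  { intros r Hr. assert (W r - W t0 = f * (r - t0)); [|lra].
    apply (is_RInt_value_unique (fun _ => f) t0 r); [|apply is_RInt_const_R].
    apply (is_RInt_ext (fun s => F (Y s))); [|apply velocity_increment; lra].
    intros s Hs. rewrite Rmin_left, Rmax_right in Hs by lra. apply Hf; lra. }
  split; [apply HW; lra|].
  assert (Y t1 - Y t0 = uniform_motion 0 (W t0) t0 f t1); [|unfold uniform_motion in *; lra].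
  apply (is_RInt_value_unique (fun r => W t0 + f * (r - t0)) t0 t1); [|apply is_RInt_affine].
  apply (is_RInt_ext W); [|apply position_increment; lra].
  intros s Hs. rewrite Rmin_left, Rmax_right in Hs by lra. apply HW; lra.
Qed.

Lemma position_below_right s t1 b :
  0 <= s < t1 -> Y s < b -> exists d, 0 < d <= t1 - s /\ Y (s + d) < b.
Proof.
  intros Hs Hb. pose proof (velocity_nonneg t1 ltac:(lra)) as HW.
  assert (Hq : 0 < (b - Y s) / (W t1 + 1)) by (apply Rdiv_lt_0_compat; lra).
  set (d := Rmin (t1 - s) ((b - Y s) / (W t1 + 1))).
  assert (Hd0 : 0 < d) by (apply Rmin_glb_lt; lra).
  assert (Hd1 : d <= t1 - s) by apply Rmin_l.
  assert (Hd2 : d * (W t1 + 1) <= b - Y s).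
  { assert (d <= (b - Y s) / (W t1 + 1)) by apply Rmin_r.
    replace (b - Y s) with ((b - Y s) / (W t1 + 1) * (W t1 + 1)) by (field; lra).
    apply Rmult_le_compat_r; lra. }
  exists d. split; [lra|].
  pose proof (position_le_linear s (s + d) ltac:(lra)).
  pose proof (velocity_nondecreasing (s + d) t1 ltac:(lra)).
  replace (s + d - s) with d in * by ring. nra.
Qed.

(* The first time at which the particle could reach [b] is a supremum; the
   right continuity of [Y] ([position_below_right]) shows it is not before [t1]. *)
Lemma motion_below_level f b t0 t1 :
  0 <= t0 <= t1 ->
  (forall r, t0 <= r -> Y r < b -> F (Y r) = f) ->
  (forall s, t0 <= s < t1 -> uniform_motion (Y t0) (W t0) t0 f s < b) ->
  forall s, t0 <= s <= t1 ->
    W s = W t0 + f * (s - t0) /\ Y s = uniform_motion (Y t0) (W t0) t0 f s.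
Proof.
  intros Ht Hf Hb.
  assert (below : forall s, t0 <= s < t1 -> Y s < b).
  { intros s Hs. destruct (Rlt_le_dec (Y s) b) as [|Hsb]; [assumption|exfalso].
    assert (Y0 : Y t0 < b).
    { specialize (Hb t0 ltac:(lra)). rewrite uniform_motion_start in Hb. exact Hb. }
    set (E := fun r => t0 <= r <= t1 /\ Y r < b).
    destruct (completeness E) as [sup [Hub Hlub]].
    { exists t1. intros r Hr. apply Hr. }
    { exists t0. split; [lra | exact Y0]. }
    assert (above_is_bound : forall r, 0 <= r -> b <= Y r -> is_upper_bound E r).
    { intros r Hr Hbr e [He Heb]. destruct (Rle_lt_dec e r) as [|Hre]; [assumption|].
      pose proof (position_nondecreasing r e ltac:(lra)). lra. }
    assert (Hsup0 : t0 <= sup) by (apply Hub; split; [lra | exact Y0]).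
    assert (Hsup1 : sup <= s) by (apply Hlub, above_is_bound; lra).
    assert (Ysup : Y sup = uniform_motion (Y t0) (W t0) t0 f sup).
    { apply (motion_under_constant_force f t0 sup ltac:(lra)).
      intros r Hr. apply Hf; [lra|].
      destruct (Rlt_le_dec (Y r) b) as [|Hrb]; [assumption|].
      pose proof (Hlub r (above_is_bound r ltac:(lra) Hrb)). lra. }
    destruct (position_below_right sup t1 b) as [d [Hd Yd]]; [lra | rewrite Ysup; apply Hb; lra |].
    assert (Ed : E (sup + d)) by (split; [lra | exact Yd]).
    pose proof (Hub _ Ed). lra. }
  intros s Hs. apply motion_under_constant_force; [lra|].
  intros r Hr. apply Hf; [lra|]. apply below; lra.
Qed.

Lemma trajectory_crosses_layer f b t0 T :
  0 <= t0 -> 0 < f -> Y t0 < b ->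
  (forall r, t0 <= r -> Y r < b -> F (Y r) = f) ->
  T = t0 + crossing_time f (W t0) (b - Y t0) ->
  (forall s, t0 <= s <= T -> Y s = uniform_motion (Y t0) (W t0) t0 f s) /\
  Y T = b /\ W T = exit_speed f (W t0) (b - Y t0).
Proof.
  intros Ht0 Hf Hb HF HT.
  pose proof (velocity_nonneg t0 Ht0) as HW.
  pose proof (crossing_time_pos f (W t0) (b - Y t0) Hf HW ltac:(lra)).
  assert (Hmotion : forall s, t0 <= s <= T ->
    W s = W t0 + f * (s - t0) /\ Y s = uniform_motion (Y t0) (W t0) t0 f s).
  { apply (motion_below_level f b t0 T); [lra | exact HF |].
    intros s Hs. replace b with (Y t0 + (b - Y t0)) by ring.
    apply uniform_motion_lt_crossing; lra. }
  destruct (Hmotion T ltac:(lra)) as [WT YT].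
  split; [intros s Hs; apply Hmotion, Hs|]. subst T. split.
  - rewrite YT, uniform_motion_crossing; [ring | lra..].
  - rewrite WT. replace (t0 + crossing_time f (W t0) (b - Y t0) - t0)
      with (crossing_time f (W t0) (b - Y t0)) by ring.
    apply exit_velocity; lra.
Qed.

Lemma trajectory_in_last_layer f t0 :
  0 <= t0 -> (forall r, t0 <= r -> F (Y r) = f) ->
  forall t, t0 <= t -> Y t = uniform_motion (Y t0) (W t0) t0 f t.
Proof.
  intros Ht0 HF t Ht. apply (motion_under_constant_force f t0 t); [lra|].
  intros r Hr. apply HF. lra.
Qed.

End Trajectory.

(** * Order of the particles and collisions *)

Lemma is_derive_uniform_motion (a w T : R -> R) (da dw dT f t z : R) :
  is_derive a z da -> is_derive w z dw -> is_derive T z dT ->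
  is_derive (fun u => uniform_motion (a u) (w u) (T u) f t) z
    (da - dT * w z + (dw - f * dT) * (t - T z)).
Proof.
  intros Ha Hw HT. unfold uniform_motion.
  auto_derive; [repeat split; eexists; eassumption |].
  replace (Derive (fun x => a x) z) with da by (symmetry; now apply is_derive_unique).
  replace (Derive (fun x => w x) z) with dw by (symmetry; now apply is_derive_unique).
  replace (Derive (fun x => T x) z) with dT by (symmetry; now apply is_derive_unique).
  field.
Qed.

Lemma is_derive_exit_speed f (w d : R -> R) dw dd z :
  0 < w z ^ 2 + 2 * f * d z -> is_derive w z dw -> is_derive d z dd ->
  is_derive (fun u => exit_speed f (w u) (d u)) z
    ((w z * dw + f * dd) / exit_speed f (w z) (d z)).
Proof.
  intros Hpos Hw Hd. unfold exit_speed.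
  auto_derive; [repeat split; try (eexists; eassumption); simpl in *; lra |].
  replace (Derive (fun x => w x) z) with dw by (symmetry; now apply is_derive_unique).
  replace (Derive (fun x => d x) z) with dd by (symmetry; now apply is_derive_unique).
  assert (0 < sqrt (w z ^ 2 + 2 * f * d z)) by (apply sqrt_lt_R0; exact Hpos).
  simpl in *. field. lra.
Qed.

Lemma is_derive_crossing_time f (w d : R -> R) dw dd z :
  0 < f -> 0 < w z ^ 2 + 2 * f * d z -> is_derive w z dw -> is_derive d z dd ->
  is_derive (fun u => crossing_time f (w u) (d u)) z
    (((w z * dw + f * dd) / exit_speed f (w z) (d z) - dw) / f).
Proof.
  intros Hf Hpos Hw Hd. unfold crossing_time, exit_speed.
  auto_derive; [repeat split; try (eexists; eassumption); simpl in *; lra |].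
  replace (Derive (fun x => w x) z) with dw by (symmetry; now apply is_derive_unique).
  replace (Derive (fun x => d x) z) with dd by (symmetry; now apply is_derive_unique).
  assert (0 < sqrt (w z ^ 2 + 2 * f * d z)) by (apply sqrt_lt_R0; exact Hpos).
  simpl in *. field. lra.
Qed.

Lemma continuous_Rmin_l c t : continuous (fun s => Rmin s c) t.
Proof.
  apply (continuous_ext (fun s => (s + c - Rabs (s - c)) * / 2)).
  { intros s. unfold Rmin, Rabs. destruct Rle_dec, Rcase_abs; lra. }
  apply (continuous_mult (fun s => s + c - Rabs (s - c)) (fun _ => / 2)); [|apply continuous_const].
  apply (continuous_minus (fun s => s + c) (fun s => Rabs (s - c))).
  - apply (continuous_plus (fun s => s) (fun _ => c));
      [apply continuous_id | apply continuous_const].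
  - apply (continuous_Rabs_comp (fun s => s - c)).
    apply (continuous_minus (fun s => s) (fun _ => c));
      [apply continuous_id | apply continuous_const].
Qed.

Lemma continuous_Rmax_l c t : continuous (fun s => Rmax s c) t.
Proof.
  apply (continuous_ext (fun s => (s + c + Rabs (s - c)) * / 2)).
  { intros s. unfold Rmax, Rabs. destruct Rle_dec, Rcase_abs; lra. }
  apply (continuous_mult (fun s => s + c + Rabs (s - c)) (fun _ => / 2)); [|apply continuous_const].
  apply (continuous_plus (fun s => s + c) (fun s => Rabs (s - c))).
  - apply (continuous_plus (fun s => s) (fun _ => c));
      [apply continuous_id | apply continuous_const].
  - apply (continuous_Rabs_comp (fun s => s - c)).
    apply (continuous_minus (fun s => s) (fun _ => c));
      [apply continuous_id | apply continuous_const].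
Qed.

Lemma continuous_uniform_motion_comp y0 w0 t0 f (h : R -> R) t :
  continuous h t -> continuous (fun s => uniform_motion y0 w0 t0 f (h s)) t.
Proof.
  intros Hh. apply (continuous_comp h (uniform_motion y0 w0 t0 f)); [exact Hh|].
  apply (ex_derive_continuous (uniform_motion y0 w0 t0 f)).
  unfold uniform_motion. auto_derive. exact I.
Qed.

Lemma increasing_of_pos_derive (f df : R -> R) a b :
  a < b -> (forall z, a <= z <= b -> is_derive f z (df z)) ->
  (forall z, a <= z <= b -> 0 < df z) -> f a < f b.
Proof.
  intros Hab Hd Hpos.
  destruct (MVT_gen f a b df) as [c [Hc Hfc]].
  - intros z Hz. rewrite Rmin_left, Rmax_right in Hz by lra. apply Hd. lra.
  - intros z Hz. rewrite Rmin_left, Rmax_right in Hz by lra.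
    apply continuity_pt_filterlim, (ex_derive_continuous f).
    exists (df z). apply Hd. lra.
  - rewrite Rmin_left, Rmax_right in Hc by lra.
    pose proof (Hpos c Hc). nra.
Qed.

Definition decreasing_on_unit (f : R -> R) : Prop :=
  forall x x', 0 <= x < x' -> x' <= 1 -> f x' < f x.

Lemma decreasing_of_neg_derive (f df : R -> R) :
  (forall z, 0 <= z <= 1 -> is_derive f z (df z)) ->
  (forall z, 0 <= z <= 1 -> df z < 0) -> decreasing_on_unit f.
Proof.
  intros Hd Hneg x x' Hx Hx'. enough (- f x < - f x') by lra.
  apply (increasing_of_pos_derive (fun u => - f u) (fun u => - df u)); [lra | |].
  - intros z Hz. apply (is_derive_opp f), Hd. lra.
  - intros z Hz. pose proof (Hneg z ltac:(lra)). lra.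
Qed.

Lemma decreasing_on_unit_le (f : R -> R) :
  decreasing_on_unit f -> forall x x', 0 <= x <= x' -> x' <= 1 -> f x' <= f x.
Proof.
  intros Hf x x' Hx Hx'. destruct (Req_dec x x') as [<- | Hne]; [lra|].
  left. apply Hf; lra.
Qed.

Lemma reversal_of_negative_derivative (f : R -> R) x0 l :
  0 <= x0 <= 1 -> is_derive f x0 l -> l < 0 ->
  exists p q, 0 <= p < q /\ q <= 1 /\ f q < f p.
Proof.
  intros Hx Hd Hl. apply is_derive_Reals in Hd.
  destruct (Hd (- l / 2) ltac:(lra)) as [delta Hdelta]. pose proof (cond_pos delta).
  assert (key : forall h, h <> 0 -> Rabs h < delta -> (f (x0 + h) - f x0) * h < 0).
  { intros h Hh Hhd. specialize (Hdelta h Hh Hhd). apply Rabs_def2 in Hdelta.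
    replace ((f (x0 + h) - f x0) * h) with ((f (x0 + h) - f x0) / h * (h * h)) by (field; exact Hh).
    assert (0 < h * h) by (apply Rsqr_pos_lt, Hh). nra. }
  destruct (Rlt_le_dec x0 1) as [Hx1 | Hx1].
  - set (h := Rmin (delta / 2) (1 - x0)).
    assert (0 < h) by (apply Rmin_glb_lt; lra).
    assert (h <= delta / 2) by apply Rmin_l. assert (h <= 1 - x0) by apply Rmin_r.
    pose proof (key h ltac:(lra) ltac:(rewrite Rabs_pos_eq; lra)).
    exists x0, (x0 + h). repeat split; nra.
  - set (h := Rmin (delta / 2) 1).
    assert (0 < h) by (apply Rmin_glb_lt; lra).
    assert (h <= delta / 2) by apply Rmin_l. assert (h <= 1) by apply Rmin_r.
    pose proof (key (- h) ltac:(lra) ltac:(rewrite Rabs_Ropp, Rabs_pos_eq; lra)).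
    exists (x0 + - h), x0. repeat split; nra.
Qed.

Lemma no_collisions_ext (y Y : R -> R -> R) :
  (forall t x, 0 <= t -> 0 <= x <= 1 -> y t x = Y t x) ->
  no_collisions y <-> no_collisions Y.
Proof.
  intros E. unfold no_collisions.
  split; intros NC t Ht x x' Hx Hx' Hne; rewrite ?E in * by assumption;
    specialize (NC t Ht x x' Hx Hx' Hne); rewrite ?E in NC by assumption; exact NC.
Qed.

Lemma no_collisions_of_increasing (Y : R -> R -> R) :
  (forall t x x', 0 <= t -> 0 <= x < x' -> x' <= 1 -> Y t x < Y t x') -> no_collisions Y.
Proof.
  intros Hinc t Ht x x' Hx Hx' Hne.
  destruct (Rlt_le_dec x x').
  - pose proof (Hinc t x x' Ht ltac:(lra) ltac:(lra)). lra.
  - pose proof (Hinc t x' x Ht ltac:(lra) ltac:(lra)). lra.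
Qed.

(* Once every particle is in the last layer, where the positions are [Q t z],
   a negative rate [c] eventually reverses the initial order near [x0]; the
   intermediate value theorem then yields a collision. *)
Lemma collision_of_negative_rate (Y Q : R -> R -> R) (T : R -> R) (x0 g c : R) :
  (forall z r, 0 <= z <= 1 -> continuous (fun s => Y s z) r) ->
  (forall z, 0 <= z <= 1 -> Y 0 z = z) ->
  (forall z, 0 <= z <= 1 -> 0 <= T z /\ ex_derive T z) ->
  (forall z t, 0 <= z <= 1 -> T z <= t -> Y t z = Q t z) ->
  0 <= x0 <= 1 -> c < 0 ->
  (forall t, is_derive (fun z => Q t z) x0 (g + c * (t - T x0))) ->
  ~ no_collisions Y.
Proof.
  intros HYc HY0 HT HYQ Hx0 Hc HQ NC.
  destruct (continuity_ab_maj T 0 1) as [zm [HTm Hzm]]; [lra| |].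
  { intros z Hz. apply continuity_pt_filterlim, (ex_derive_continuous T), HT, Hz. }
  assert (HK : 0 < (Rabs g + 1) / - c)
    by (apply Rdiv_lt_0_compat; [pose proof (Rabs_pos g) |]; lra).
  set (t := T zm + (Rabs g + 1) / - c).
  assert (Hlate : forall z, 0 <= z <= 1 -> T z <= t)
    by (intros z Hz; pose proof (HTm z Hz); unfold t; lra).
  assert (Hrate : g + c * (t - T x0) < 0).
  { assert (Hct : c * (t - T x0) <= c * ((Rabs g + 1) / - c)).
    { apply Rmult_le_compat_neg_l; [lra|]. pose proof (HTm x0 Hx0). unfold t. lra. }
    replace (c * ((Rabs g + 1) / - c)) with (- (Rabs g + 1)) in Hct by (field; lra).
    pose proof (Rle_abs g). lra. }
  destruct (reversal_of_negative_derivative _ _ _ Hx0 (HQ t) Hrate) as [p [q [Hpq [Hq Hrev]]]].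
  set (G := fun s => Y s p - Y s q).
  assert (HG : continuity G).
  { intros r. apply continuity_pt_filterlim.
    apply (continuous_minus (fun s => Y s p) (fun s => Y s q)); apply HYc; lra. }
  destruct (IVT G 0 t HG) as [r [Hr Gr]].
  - pose proof (HT zm Hzm). unfold t. lra.
  - unfold G. rewrite !HY0 by lra. lra.
  - unfold G. rewrite !HYQ by (try apply Hlate; lra). lra.
  - apply (NC r ltac:(lra) p q ltac:(lra) ltac:(lra) ltac:(lra)). unfold G in Gr. lra.
Qed.

(** * One gap *)

Section OneGap.
Variables (F1 F2 A : R) (v dv : R -> R).
Hypotheses (F1_pos : 0 < F1) (F2_nonneg : 0 <= F2) (A_gt_1 : 1 < A).
Hypothesis v_derive : forall z, 0 <= z <= 1 -> is_derive v z (dv z).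
Hypothesis v_nonneg : forall z, 0 <= z <= 1 -> 0 <= v z.

Definition arrival_speed z := exit_speed F1 (v z) (A - z).
Definition arrival_time z := crossing_time F1 (v z) (A - z).

(* Clamping [t] to the two phases keeps the formula continuous in [t]. *)
Definition one_gap_motion t z :=
  uniform_motion z (v z) 0 F1 (Rmin t (arrival_time z))
  + uniform_motion A (arrival_speed z) (arrival_time z) F2 (Rmax t (arrival_time z)) - A.

Section Particle.
Variable z : R.
Hypothesis z_range : 0 <= z <= 1.

Lemma arrival_time_pos : 0 < arrival_time z.
Proof. apply crossing_time_pos; [lra | apply v_nonneg, z_range | lra]. Qed.

Lemma arrival_speed_gt : v z < arrival_speed z.
Proof. apply exit_speed_gt; [lra | apply v_nonneg, z_range | lra]. Qed.

Lemma arrival_speed_sq : arrival_speed z ^ 2 = v z ^ 2 + 2 * F1 * (A - z).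
Proof. apply exit_speed_sq; lra. Qed.

Lemma first_phase_arrival : uniform_motion z (v z) 0 F1 (arrival_time z) = A.
Proof.
  unfold arrival_time. rewrite <- (Rplus_0_l (crossing_time _ _ _)).
  rewrite uniform_motion_crossing; [ring | lra ..].
Qed.

Lemma one_gap_motion_first t :
  t <= arrival_time z -> one_gap_motion t z = uniform_motion z (v z) 0 F1 t.
Proof.
  intros Ht. unfold one_gap_motion.
  rewrite Rmin_left, Rmax_right, uniform_motion_start by lra. ring.
Qed.

Lemma one_gap_motion_second t :
  arrival_time z <= t ->
  one_gap_motion t z = uniform_motion A (arrival_speed z) (arrival_time z) F2 t.
Proof.
  intros Ht. unfold one_gap_motion.
  rewrite Rmin_right, Rmax_left, first_phase_arrival by lra. ring.
Qed.

Lemma one_gap_motion_lt_A t : 0 <= t < arrival_time z -> one_gap_motion t z < A.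
Proof.
  intros Ht. rewrite one_gap_motion_first by lra.
  replace A with (z + (A - z)) by ring.
  apply uniform_motion_lt_crossing;
    [lra | apply v_nonneg, z_range | lra | rewrite Rplus_0_l; exact Ht].
Qed.

Lemma one_gap_motion_gt_A t : arrival_time z < t -> A < one_gap_motion t z.
Proof.
  intros Ht. rewrite one_gap_motion_second by lra.
  pose proof arrival_speed_gt. pose proof (v_nonneg z z_range).
  apply uniform_motion_gt_start; lra.
Qed.

End Particle.

Lemma one_gap_trajectory y :
  is_trajectory (F_one_gap F1 F2 A) v y ->
  forall t x, 0 <= t -> 0 <= x <= 1 -> y t x = one_gap_motion t x.
Proof.
  intros [w Hw] t x Ht Hx.
  set (F := F_one_gap F1 F2 A). set (Y := fun s => y s x). set (W := fun s => w s x).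
  assert (HF : forall u, 0 <= F u) by (intros u; unfold F, F_one_gap; destruct Rlt_dec; lra).
  assert (Hv : 0 <= v x) by (apply v_nonneg, Hx).
  assert (HYW : trajectory_from F x (v x) Y W) by (intros s Hs; apply Hw; assumption).
  destruct (trajectory_start F x (v x) Y W HYW) as [Y0 W0].
  pose proof (arrival_time_pos x Hx) as Htau.
  destruct (trajectory_crosses_layer F x (v x) Y W HF Hv HYW F1 A 0 (arrival_time x))
    as [Hfirst [YA WA]]; [lra | exact F1_pos | rewrite Y0; lra | | |].
  { intros r _ Hr. unfold F, F_one_gap. destruct Rlt_dec; [reflexivity | contradiction]. }
  { rewrite Y0, W0, Rplus_0_l. reflexivity. }
  rewrite Y0, W0 in *.
  destruct (Rle_lt_dec t (arrival_time x)) as [Hle | Hlt].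
  - rewrite one_gap_motion_first by assumption. apply Hfirst. lra.
  - rewrite one_gap_motion_second by (assumption || lra).
    change (y t x) with (Y t).
    rewrite (trajectory_in_last_layer F x (v x) Y W HYW F2 (arrival_time x)); [| lra | | lra].
    + rewrite YA, WA. reflexivity.
    + intros r Hr.
      pose proof (position_nondecreasing F x (v x) Y W HF Hv HYW (arrival_time x) r ltac:(lra)).
      unfold F, F_one_gap. destruct Rlt_dec; [lra | reflexivity].
Qed.

Definition darrival_speed z := (v z * dv z - F1) / arrival_speed z.
Definition darrival_time z := (darrival_speed z - dv z) / F1.
Definition stretch_at_arrival z := 1 + dv z * arrival_time z.
Definition stretch_rate z := darrival_speed z - F2 * darrival_time z.

Section ParticleDerivatives.
Variable z : R.
Hypothesis z_range : 0 <= z <= 1.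

Let speed_gt_v := arrival_speed_gt z z_range.
Let v_z_nonneg := v_nonneg z z_range.

Lemma arrival_time_eq : arrival_time z = (arrival_speed z - v z) / F1.
Proof. reflexivity. Qed.

Lemma arrival_speed_derive : is_derive arrival_speed z (darrival_speed z).
Proof.
  unfold darrival_speed. replace (v z * dv z - F1) with (v z * dv z + F1 * -1) by ring.
  apply (is_derive_exit_speed F1 v (fun u => A - u)); [nra | apply v_derive, z_range |].
  auto_derive; [exact I | ring].
Qed.

Lemma arrival_time_derive : is_derive arrival_time z (darrival_time z).
Proof.
  unfold darrival_time, darrival_speed.
  replace (v z * dv z - F1) with (v z * dv z + F1 * -1) by ring.
  apply (is_derive_crossing_time F1 v (fun u => A - u)); [lra | nra | apply v_derive, z_range |].
  auto_derive; [exact I | ring].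
Qed.

Lemma first_phase_derive t :
  is_derive (fun u => uniform_motion u (v u) 0 F1 t) z (1 + dv z * t).
Proof.
  replace (1 + dv z * t) with (1 - 0 * v z + (dv z - F1 * 0) * (t - 0)) by ring.
  apply (is_derive_uniform_motion (fun u => u) v (fun _ => 0));
    [apply (is_derive_id z) | apply v_derive, z_range | apply (is_derive_const 0 z)].
Qed.

Lemma second_phase_derive t :
  is_derive (fun u => uniform_motion A (arrival_speed u) (arrival_time u) F2 t) z
    (stretch_at_arrival z + stretch_rate z * (t - arrival_time z)).
Proof.
  replace (stretch_at_arrival z + stretch_rate z * (t - arrival_time z))
    with (0 - darrival_time z * arrival_speed z
          + (darrival_speed z - F2 * darrival_time z) * (t - arrival_time z)).
  - apply (is_derive_uniform_motion (fun _ => A));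
      [apply (is_derive_const A z) | apply arrival_speed_derive | apply arrival_time_derive].
  - unfold stretch_at_arrival, stretch_rate, darrival_time, darrival_speed.
    rewrite arrival_time_eq. field. lra.
Qed.

Lemma darrival_time_eq : darrival_time z = - stretch_at_arrival z / arrival_speed z.
Proof.
  unfold darrival_time, darrival_speed, stretch_at_arrival. rewrite arrival_time_eq.
  field. lra.
Qed.

Lemma stretch_rate_eq :
  stretch_rate z * (F1 * arrival_speed z)
  = dv z * ((F1 - F2) * v z + F2 * arrival_speed z) - F1 * (F1 - F2).
Proof. unfold stretch_rate, darrival_time, darrival_speed. field. lra. Qed.

Lemma stretch_at_arrival_eq : stretch_at_arrival z * F1 = F1 + dv z * (arrival_speed z - v z).
Proof. unfold stretch_at_arrival. rewrite arrival_time_eq. field. lra. Qed.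

(* The weighted difference below is [- F1 ^ 2 * arrival_speed z < 0], which is
   incompatible with a nonnegative rate and a nonpositive stretch. *)
Lemma stretch_at_arrival_pos : 0 <= stretch_rate z -> 0 < stretch_at_arrival z.
Proof.
  intros Hc. pose proof stretch_rate_eq as Ec. pose proof stretch_at_arrival_eq as Eg.
  set (S := arrival_speed z) in *.
  set (K := (F1 - F2) * v z + F2 * S).
  assert (HK : 0 <= K) by (unfold K; nra).
  assert (key : (S - v z) * (stretch_rate z * (F1 * S)) - stretch_at_arrival z * F1 * K
                = - (F1 * F1 * S)).
  { rewrite Ec, Eg. unfold K. ring. }
  destruct (Rlt_le_dec 0 (stretch_at_arrival z)) as [|Hg]; [assumption | exfalso].
  assert (0 <= (S - v z) * (stretch_rate z * (F1 * S)))
    by (apply Rmult_le_pos; [lra | apply Rmult_le_pos; [exact Hc | nra]]).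
  assert (0 <= - (stretch_at_arrival z * F1) * K) by (apply Rmult_le_pos; nra).
  assert (0 < F1 * F1 * S) by (apply Rmult_lt_0_compat; nra).
  lra.
Qed.

Lemma speed_condition_iff :
  -2 * (A - z) * dv z < v z + arrival_speed z <-> 0 < stretch_at_arrival z.
Proof.
  pose proof (arrival_speed_sq z z_range) as Hsq.
  assert (E : (arrival_speed z + v z) * F1 * stretch_at_arrival z
              = F1 * (v z + arrival_speed z + 2 * (A - z) * dv z)).
  { rewrite Rmult_assoc, (Rmult_comm F1), stretch_at_arrival_eq.
    replace (2 * (A - z)) with ((arrival_speed z ^ 2 - v z ^ 2) / F1) by (rewrite Hsq; field; lra).
    field. lra. }
  rewrite <- (Rmult_pos_cancel_l ((arrival_speed z + v z) * F1)) by nra.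
  rewrite E, Rmult_pos_cancel_l by lra. lra.
Qed.

Lemma rate_condition_iff :
  dv z * ((F1 - F2) * v z + F2 * arrival_speed z) >= F1 * (F1 - F2) <-> 0 <= stretch_rate z.
Proof.
  rewrite <- (Rmult_nonneg_cancel_l (F1 * arrival_speed z)) by nra.
  rewrite (Rmult_comm (F1 * arrival_speed z)), stretch_rate_eq. lra.
Qed.

End ParticleDerivatives.

Section Ordered.
Hypothesis rate_nonneg : forall z, 0 <= z <= 1 -> 0 <= stretch_rate z.

Lemma arrival_time_decreasing : decreasing_on_unit arrival_time.
Proof.
  apply (decreasing_of_neg_derive arrival_time darrival_time); [exact arrival_time_derive|].
  intros z Hz. rewrite darrival_time_eq by exact Hz.
  pose proof (stretch_at_arrival_pos z Hz (rate_nonneg z Hz)).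
  pose proof (arrival_speed_gt z Hz). pose proof (v_nonneg z Hz).
  assert (0 < stretch_at_arrival z / arrival_speed z) by (apply Rdiv_lt_0_compat; lra).
  unfold Rdiv in *. lra.
Qed.

Lemma one_gap_motion_increasing t x x' :
  0 <= t -> 0 <= x < x' -> x' <= 1 -> one_gap_motion t x < one_gap_motion t x'.
Proof.
  intros Ht Hx Hx'. pose proof (arrival_time_decreasing x x' Hx Hx').
  destruct (Rle_lt_dec t (arrival_time x')) as [H1 | H1].
  - rewrite !one_gap_motion_first by lra.
    apply (increasing_of_pos_derive (fun u => uniform_motion u (v u) 0 F1 t)
                                    (fun u => 1 + dv u * t));
      [lra | intros z Hz; apply first_phase_derive; lra |].
    intros z Hz. assert (Hz' : 0 <= z <= 1) by lra.
    pose proof (stretch_at_arrival_pos z Hz' (rate_nonneg z Hz')).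
    pose proof (decreasing_on_unit_le _ arrival_time_decreasing z x' ltac:(lra) Hx').
    unfold stretch_at_arrival in *. destruct (Rle_lt_dec 0 (dv z)); nra.
  - destruct (Rle_lt_dec (arrival_time x) t) as [H2 | H2].
    + rewrite !one_gap_motion_second by lra.
      apply (increasing_of_pos_derive
               (fun u => uniform_motion A (arrival_speed u) (arrival_time u) F2 t)
               (fun u => stretch_at_arrival u + stretch_rate u * (t - arrival_time u)));
        [lra | intros z Hz; apply second_phase_derive; lra |].
      intros z Hz. assert (Hz' : 0 <= z <= 1) by lra.
      pose proof (stretch_at_arrival_pos z Hz' (rate_nonneg z Hz')).
      pose proof (rate_nonneg z Hz').
      pose proof (decreasing_on_unit_le _ arrival_time_decreasing x z ltac:(lra) ltac:(lra)).
      nra.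
    + pose proof (one_gap_motion_lt_A x ltac:(lra) t ltac:(lra)).
      pose proof (one_gap_motion_gt_A x' ltac:(lra) t ltac:(lra)). lra.
Qed.

End Ordered.

Lemma one_gap_collision x0 :
  0 <= x0 <= 1 -> stretch_rate x0 < 0 -> ~ no_collisions one_gap_motion.
Proof.
  intros Hx0 Hc.
  apply (collision_of_negative_rate one_gap_motion
           (fun t z => uniform_motion A (arrival_speed z) (arrival_time z) F2 t)
           arrival_time x0 (stretch_at_arrival x0) (stretch_rate x0)); try assumption.
  - intros z r Hz. unfold one_gap_motion.
    apply (continuous_minus (fun s => _ + _) (fun _ => A)); [|apply continuous_const].
    apply (continuous_plus (fun s => uniform_motion z (v z) 0 F1 (Rmin s (arrival_time z)))).
    + apply continuous_uniform_motion_comp, continuous_Rmin_l.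
    + apply continuous_uniform_motion_comp, continuous_Rmax_l.
  - intros z Hz. pose proof (arrival_time_pos z Hz).
    rewrite one_gap_motion_first by lra. apply uniform_motion_start.
  - intros z Hz. split; [apply Rlt_le, arrival_time_pos, Hz|].
    eexists. apply arrival_time_derive, Hz.
  - intros z t Hz Ht. apply one_gap_motion_second; assumption.
  - intros t. apply second_phase_derive, Hx0.
Qed.

Lemma one_gap_no_collisions_iff y :
  is_trajectory (F_one_gap F1 F2 A) v y ->
  no_collisions y <-> forall x, 0 <= x <= 1 -> 0 <= stretch_rate x.
Proof.
  intros Hy. rewrite (no_collisions_ext y one_gap_motion)
    by (intros; apply one_gap_trajectory; assumption).
  split.
  - intros NC x Hx. destruct (Rle_lt_dec 0 (stretch_rate x)) as [|Hc]; [assumption|].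
    exfalso. exact (one_gap_collision x Hx Hc NC).
  - intros Hc. apply no_collisions_of_increasing. intros.
    apply one_gap_motion_increasing; assumption.
Qed.

Lemma one_gap_no_collisions_criterion y :
  is_trajectory (F_one_gap F1 F2 A) v y ->
  no_collisions y <->
  (forall x, 0 <= x <= 1 ->
     -2 * (A - x) * dv x < v x + sqrt (Dfun F1 A v x) /\
     dv x * ((F1 - F2) * v x + F2 * sqrt (Dfun F1 A v x)) >= F1 * (F1 - F2)).
Proof.
  intros Hy. rewrite (one_gap_no_collisions_iff y Hy).
  split; intros H x Hx; specialize (H x Hx).
  - split.
    + apply (speed_condition_iff x Hx), (stretch_at_arrival_pos x Hx), H.
    + apply (rate_condition_iff x Hx), H.
  - apply (rate_condition_iff x Hx), H.
Qed.

End OneGap.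

Lemma one_gap_at_rest_no_collisions_iff F1 F2 A y :
  0 < F1 -> 0 <= F2 -> 1 < A ->
  is_trajectory (F_one_gap F1 F2 A) (fun _ => 0) y -> (no_collisions y <-> F2 >= F1).
Proof.
  intros HF1 HF2 HA Hy.
  rewrite (one_gap_no_collisions_criterion F1 F2 A (fun _ => 0) (fun _ => 0)); try assumption.
  - split.
    + intros H. destruct (H 0 ltac:(lra)) as [_ H2]. nra.
    + intros H x Hx. split; [|nra].
      assert (0 < sqrt (Dfun F1 A (fun _ => 0) x)) by (apply sqrt_lt_R0; unfold Dfun; nra).
      lra.
  - intros x _. apply (is_derive_const 0 x).
  - intros x _. lra.
Qed.

(** * Two gaps *)

Section TwoGaps.
Variables (F1 F2 F3 A B : R).
Hypotheses (F2_pos : 0 < F2) (F2_lt_F1 : F2 < F1) (F2_lt_F3 : F2 < F3).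
Hypotheses (A_gt_1 : 1 < A) (A_lt_B : A < B).

Definition speed_at_A z := exit_speed F1 0 (A - z).
Definition time_at_A z := crossing_time F1 0 (A - z).
Definition speed_at_B z := exit_speed F2 (speed_at_A z) (B - A).
Definition time_at_B z := time_at_A z + crossing_time F2 (speed_at_A z) (B - A).

Definition two_gap_motion t z :=
  uniform_motion z 0 0 F1 (Rmin t (time_at_A z))
  + (uniform_motion A (speed_at_A z) (time_at_A z) F2
       (Rmax (Rmin t (time_at_B z)) (time_at_A z)) - A)
  + (uniform_motion B (speed_at_B z) (time_at_B z) F3 (Rmax t (time_at_B z)) - B).

Section Particle.
Variable z : R.
Hypothesis z_range : 0 <= z <= 1.

Lemma speed_at_A_sq : speed_at_A z ^ 2 = 2 * F1 * (A - z).
Proof. unfold speed_at_A. rewrite exit_speed_sq by lra. ring. Qed.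

Lemma speed_at_B_sq : speed_at_B z ^ 2 = 2 * F1 * (A - z) + 2 * F2 * (B - A).
Proof. unfold speed_at_B. rewrite exit_speed_sq, speed_at_A_sq by lra. ring. Qed.

Lemma speed_at_A_pos : 0 < speed_at_A z.
Proof. apply (exit_speed_gt F1 0 (A - z)); lra. Qed.

Lemma speed_at_B_gt : speed_at_A z < speed_at_B z.
Proof. pose proof speed_at_A_pos. apply exit_speed_gt; lra. Qed.

Lemma time_at_A_pos : 0 < time_at_A z.
Proof. apply crossing_time_pos; lra. Qed.

Lemma time_at_B_gt : time_at_A z < time_at_B z.
Proof.
  pose proof speed_at_A_pos. unfold time_at_B.
  pose proof (crossing_time_pos F2 (speed_at_A z) (B - A)). lra.
Qed.

Lemma first_layer_exit : uniform_motion z 0 0 F1 (time_at_A z) = A.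
Proof.
  unfold time_at_A. rewrite <- (Rplus_0_l (crossing_time _ _ _)).
  rewrite uniform_motion_crossing; [ring | lra ..].
Qed.

Lemma second_layer_exit :
  uniform_motion A (speed_at_A z) (time_at_A z) F2 (time_at_B z) = B.
Proof.
  unfold time_at_B. rewrite uniform_motion_crossing; [ring | lra ..].
Qed.

Lemma two_gap_motion_first t :
  t <= time_at_A z -> two_gap_motion t z = uniform_motion z 0 0 F1 t.
Proof.
  intros Ht. pose proof time_at_B_gt. unfold two_gap_motion.
  rewrite (Rmin_left t), (Rmin_left t), Rmax_right, Rmax_right by lra.
  rewrite !uniform_motion_start. ring.
Qed.

Lemma two_gap_motion_second t :
  time_at_A z <= t <= time_at_B z ->
  two_gap_motion t z = uniform_motion A (speed_at_A z) (time_at_A z) F2 t.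
Proof.
  intros Ht. unfold two_gap_motion.
  rewrite (Rmin_right t), (Rmin_left t), Rmax_left, (Rmax_right t) by lra.
  rewrite first_layer_exit, uniform_motion_start. ring.
Qed.

Lemma two_gap_motion_third t :
  time_at_B z <= t ->
  two_gap_motion t z = uniform_motion B (speed_at_B z) (time_at_B z) F3 t.
Proof.
  intros Ht. pose proof time_at_B_gt. unfold two_gap_motion.
  rewrite (Rmin_right t), (Rmin_right t), Rmax_left, (Rmax_left t) by lra.
  rewrite first_layer_exit, second_layer_exit. ring.
Qed.

Lemma two_gap_motion_le_A t : 0 <= t <= time_at_A z -> two_gap_motion t z <= A.
Proof.
  intros Ht. rewrite two_gap_motion_first, <- first_layer_exit by lra.
  apply uniform_motion_mono; lra.
Qed.

Lemma two_gap_motion_gt_B t : time_at_B z < t -> B < two_gap_motion t z.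
Proof.
  intros Ht. pose proof speed_at_A_pos. pose proof speed_at_B_gt.
  rewrite two_gap_motion_third by lra. apply uniform_motion_gt_start; lra.
Qed.

Lemma two_gap_motion_gt_A t : time_at_A z < t -> A < two_gap_motion t z.
Proof.
  intros Ht. destruct (Rle_lt_dec t (time_at_B z)).
  - pose proof speed_at_A_pos.
    rewrite two_gap_motion_second by lra. apply uniform_motion_gt_start; lra.
  - pose proof (two_gap_motion_gt_B t). lra.
Qed.

Lemma two_gap_motion_le_B t : 0 <= t <= time_at_B z -> two_gap_motion t z <= B.
Proof.
  intros Ht. destruct (Rle_lt_dec t (time_at_A z)).
  - pose proof (two_gap_motion_le_A t). lra.
  - pose proof speed_at_A_pos.
    rewrite two_gap_motion_second, <- second_layer_exit by lra.
    apply uniform_motion_mono; lra.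
Qed.

End Particle.

Lemma two_gap_trajectory y :
  is_trajectory (F_two_gaps F1 F2 F3 A B) (fun _ => 0) y ->
  forall t x, 0 <= t -> 0 <= x <= 1 -> y t x = two_gap_motion t x.
Proof.
  intros [w Hw] t x Ht Hx.
  set (F := F_two_gaps F1 F2 F3 A B). set (Y := fun s => y s x). set (W := fun s => w s x).
  assert (HF : forall u, 0 <= F u)
    by (intros u; unfold F, F_two_gaps; destruct Rlt_dec; [|destruct Rlt_dec]; lra).
  assert (Hv0 : 0 <= 0) by lra.
  assert (HYW : trajectory_from F x 0 Y W) by (intros s Hs; apply Hw; assumption).
  destruct (trajectory_start F x 0 Y W HYW) as [Y0 W0].
  pose proof (time_at_A_pos x Hx) as HtA. pose proof (time_at_B_gt x Hx) as HtB.
  destruct (trajectory_crosses_layer F x 0 Y W HF Hv0 HYW F1 A 0 (time_at_A x))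
    as [Hfirst [YA WA]]; [lra | lra | rewrite Y0; lra | | |].
  { intros r _ Hr. unfold F, F_two_gaps. destruct Rlt_dec; [reflexivity | contradiction]. }
  { rewrite Y0, W0, Rplus_0_l. reflexivity. }
  rewrite Y0, W0 in *.
  destruct (Rle_lt_dec t (time_at_A x)) as [H1 | H1].
  { rewrite two_gap_motion_first by assumption. apply Hfirst. lra. }
  destruct (trajectory_crosses_layer F x 0 Y W HF Hv0 HYW F2 B (time_at_A x) (time_at_B x))
    as [Hsecond [YB WB]]; [lra | lra | rewrite YA; lra | | |].
  { intros r Hr HrB.
    pose proof (position_nondecreasing F x 0 Y W HF Hv0 HYW (time_at_A x) r ltac:(lra)).
    unfold F, F_two_gaps.
    destruct Rlt_dec; [lra|]. destruct Rlt_dec; [reflexivity | contradiction]. }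
  { rewrite YA, WA. reflexivity. }
  rewrite YA, WA in *.
  destruct (Rle_lt_dec t (time_at_B x)) as [H2 | H2].
  { rewrite two_gap_motion_second by (assumption || lra). apply Hsecond. lra. }
  rewrite two_gap_motion_third by (assumption || lra).
  change (y t x) with (Y t).
  rewrite (trajectory_in_last_layer F x 0 Y W HYW F3 (time_at_B x)); [| lra | | lra].
  - rewrite YB, WB. reflexivity.
  - intros r Hr.
    pose proof (position_nondecreasing F x 0 Y W HF Hv0 HYW (time_at_B x) r ltac:(lra)).
    unfold F, F_two_gaps. destruct Rlt_dec; [lra|]. destruct Rlt_dec; [lra | reflexivity].
Qed.

Definition dspeed_at_A z := - F1 / speed_at_A z.
Definition dtime_at_A z := dspeed_at_A z / F1.
Definition dspeed_at_B z := - F1 / speed_at_B z.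
Definition dtime_at_B z := dtime_at_A z + (dspeed_at_B z - dspeed_at_A z) / F2.
Definition rate_before_B z := dspeed_at_A z - F2 * dtime_at_A z.
Definition stretch_at_B z := - dtime_at_B z * speed_at_B z.
Definition rate_after_B z := dspeed_at_B z - F3 * dtime_at_B z.

Section ParticleDerivatives.
Variable z : R.
Hypothesis z_range : 0 <= z <= 1.

Let uA_pos := speed_at_A_pos z z_range.
Let uB_gt := speed_at_B_gt z z_range.

Lemma speed_at_A_derive : is_derive speed_at_A z (dspeed_at_A z).
Proof.
  unfold dspeed_at_A. replace (- F1) with (0 * 0 + F1 * -1) by ring.
  apply (is_derive_exit_speed F1 (fun _ => 0) (fun u => A - u));
    [nra | apply (is_derive_const 0 z) | auto_derive; [exact I | ring]].
Qed.

Lemma time_at_A_derive : is_derive time_at_A z (dtime_at_A z).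
Proof.
  unfold dtime_at_A, dspeed_at_A.
  replace (- F1 / speed_at_A z / F1) with (((0 * 0 + F1 * -1) / speed_at_A z - 0) / F1)
    by (field; lra).
  apply (is_derive_crossing_time F1 (fun _ => 0) (fun u => A - u));
    [lra | nra | apply (is_derive_const 0 z) | auto_derive; [exact I | ring]].
Qed.

Lemma speed_at_B_derive : is_derive speed_at_B z (dspeed_at_B z).
Proof.
  unfold dspeed_at_B.
  replace (- F1 / speed_at_B z) with ((speed_at_A z * dspeed_at_A z + F2 * 0) / speed_at_B z)
    by (unfold dspeed_at_A; field; lra).
  apply (is_derive_exit_speed F2 speed_at_A (fun _ => B - A));
    [nra | apply speed_at_A_derive | apply (is_derive_const (B - A) z)].
Qed.

Lemma time_at_B_derive : is_derive time_at_B z (dtime_at_B z).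
Proof.
  unfold dtime_at_B, dspeed_at_B.
  replace (- F1 / speed_at_B z)
    with ((speed_at_A z * dspeed_at_A z + F2 * 0) / speed_at_B z)
    by (unfold dspeed_at_A; field; lra).
  apply (is_derive_plus time_at_A (fun u => crossing_time F2 (speed_at_A u) (B - A)));
    [apply time_at_A_derive |].
  apply (is_derive_crossing_time F2 speed_at_A (fun _ => B - A));
    [lra | nra | apply speed_at_A_derive | apply (is_derive_const (B - A) z)].
Qed.

Lemma second_layer_derive t :
  is_derive (fun u => uniform_motion A (speed_at_A u) (time_at_A u) F2 t) z
    (1 + rate_before_B z * (t - time_at_A z)).
Proof.
  replace (1 + rate_before_B z * (t - time_at_A z))
    with (0 - dtime_at_A z * speed_at_A z
          + (dspeed_at_A z - F2 * dtime_at_A z) * (t - time_at_A z))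
    by (unfold rate_before_B, dtime_at_A, dspeed_at_A; field; lra).
  apply (is_derive_uniform_motion (fun _ => A));
    [apply (is_derive_const A z) | apply speed_at_A_derive | apply time_at_A_derive].
Qed.

Lemma third_layer_derive t :
  is_derive (fun u => uniform_motion B (speed_at_B u) (time_at_B u) F3 t) z
    (stretch_at_B z + rate_after_B z * (t - time_at_B z)).
Proof.
  replace (stretch_at_B z + rate_after_B z * (t - time_at_B z))
    with (0 - dtime_at_B z * speed_at_B z
          + (dspeed_at_B z - F3 * dtime_at_B z) * (t - time_at_B z))
    by (unfold stretch_at_B, rate_after_B; ring).
  apply (is_derive_uniform_motion (fun _ => B));
    [apply (is_derive_const B z) | apply speed_at_B_derive | apply time_at_B_derive].
Qed.

Lemma time_at_B_sub : time_at_B z - time_at_A z = (speed_at_B z - speed_at_A z) / F2.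
Proof. unfold time_at_B, crossing_time. fold (speed_at_B z). ring. Qed.

Lemma rate_before_B_neg : rate_before_B z < 0.
Proof.
  unfold rate_before_B, dtime_at_A, dspeed_at_A.
  replace (- F1 / speed_at_A z - F2 * (- F1 / speed_at_A z / F1))
    with (- ((F1 - F2) / speed_at_A z)) by (field; lra).
  assert (0 < (F1 - F2) / speed_at_A z) by (apply Rdiv_lt_0_compat; lra). lra.
Qed.

Lemma stretch_at_B_eq : stretch_at_B z = 1 + rate_before_B z * (time_at_B z - time_at_A z).
Proof.
  rewrite time_at_B_sub.
  unfold stretch_at_B, rate_before_B, dtime_at_B, dtime_at_A, dspeed_at_B, dspeed_at_A.
  field. lra.
Qed.

Lemma dtime_at_B_eq : dtime_at_B z = - stretch_at_B z / speed_at_B z.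
Proof. unfold stretch_at_B. field. lra. Qed.

Lemma stretch_at_B_poly :
  stretch_at_B z * (F2 * speed_at_A z) = F1 * speed_at_A z - (F1 - F2) * speed_at_B z.
Proof.
  unfold stretch_at_B, dtime_at_B, dtime_at_A, dspeed_at_B, dspeed_at_A. field. lra.
Qed.

Lemma rate_after_B_poly :
  rate_after_B z * (F2 * speed_at_A z * speed_at_B z)
  = F1 * (F3 - F2) * speed_at_A z - F3 * (F1 - F2) * speed_at_B z.
Proof.
  unfold rate_after_B, dtime_at_B, dtime_at_A, dspeed_at_B, dspeed_at_A. field. lra.
Qed.

Lemma stretch_at_B_pos : 0 <= rate_after_B z -> 0 < stretch_at_B z.
Proof.
  intros Hc. pose proof rate_after_B_poly as Ec. pose proof stretch_at_B_poly as Eg.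
  assert (0 <= rate_after_B z * (F2 * speed_at_A z * speed_at_B z))
    by (apply Rmult_le_pos; [exact Hc | apply Rmult_le_pos; [apply Rmult_le_pos|]; lra]).
  assert (0 < F1 * F2 * speed_at_A z) by (apply Rmult_lt_0_compat; [apply Rmult_lt_0_compat|]; lra).
  assert (F3 * ((F1 - F2) * speed_at_B z) < F3 * (F1 * speed_at_A z)) by lra.
  assert ((F1 - F2) * speed_at_B z < F1 * speed_at_A z) by (apply (Rmult_lt_reg_l F3); lra).
  apply (Rmult_pos_cancel_l (F2 * speed_at_A z)); [nra | lra].
Qed.

(* [alpha] comes out of squaring [R <= L] (see [rate_after_B_poly]) and
   substituting [speed_at_A_sq] and [speed_at_B_sq]. *)
Lemma rate_after_B_nonneg_iff : 0 <= rate_after_B z <-> B - A <= alpha F1 F2 F3 * (A - z).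
Proof.
  set (L := F1 * (F3 - F2) * speed_at_A z). set (R := F3 * (F1 - F2) * speed_at_B z).
  assert (HL : 0 < L) by (unfold L; apply Rmult_lt_0_compat; [apply Rmult_lt_0_compat|]; lra).
  assert (HR : 0 < R) by (unfold R; apply Rmult_lt_0_compat; [apply Rmult_lt_0_compat|]; lra).
  assert (Hk : 0 < 2 * F2 * (F1 - F2) ^ 2 * F3 ^ 2)
    by (apply Rmult_lt_0_compat; [apply Rmult_lt_0_compat | apply pow_lt];
        [lra | apply pow_lt | ]; lra).
  assert (Hsq : (L + R) * (L - R)
                = 2 * F2 * (F1 - F2) ^ 2 * F3 ^ 2 * (alpha F1 F2 F3 * (A - z) - (B - A))).
  { replace ((L + R) * (L - R)) with (F1 ^ 2 * (F3 - F2) ^ 2 * speed_at_A z ^ 2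
                                       - F3 ^ 2 * (F1 - F2) ^ 2 * speed_at_B z ^ 2)
      by (unfold L, R; ring).
    rewrite speed_at_A_sq, speed_at_B_sq by exact z_range. unfold alpha. field. split; lra. }
  rewrite <- (Rmult_nonneg_cancel_l (F2 * speed_at_A z * speed_at_B z))
    by (apply Rmult_lt_0_compat; [apply Rmult_lt_0_compat|]; lra).
  rewrite (Rmult_comm (F2 * speed_at_A z * speed_at_B z)), rate_after_B_poly.
  fold L R. rewrite <- (Rmult_nonneg_cancel_l (L + R) (L - R)), Hsq, Rmult_nonneg_cancel_l by lra.
  lra.
Qed.

End ParticleDerivatives.

Lemma time_at_A_decreasing : decreasing_on_unit time_at_A.
Proof.
  apply (decreasing_of_neg_derive time_at_A dtime_at_A); [exact time_at_A_derive|].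
  intros z Hz. pose proof (speed_at_A_pos z Hz). unfold dtime_at_A, dspeed_at_A.
  replace (- F1 / speed_at_A z / F1) with (- (1 / speed_at_A z)) by (field; lra).
  assert (0 < 1 / speed_at_A z) by (apply Rdiv_lt_0_compat; lra). lra.
Qed.

Section Ordered.
Hypothesis rate_nonneg : forall z, 0 <= z <= 1 -> 0 <= rate_after_B z.

Lemma time_at_B_decreasing : decreasing_on_unit time_at_B.
Proof.
  apply (decreasing_of_neg_derive time_at_B dtime_at_B); [exact time_at_B_derive|].
  intros z Hz. rewrite dtime_at_B_eq by exact Hz.
  pose proof (stretch_at_B_pos z Hz (rate_nonneg z Hz)).
  pose proof (speed_at_A_pos z Hz). pose proof (speed_at_B_gt z Hz).
  assert (0 < stretch_at_B z / speed_at_B z) by (apply Rdiv_lt_0_compat; lra).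
  unfold Rdiv in *. lra.
Qed.

Lemma two_gap_motion_increasing t x x' :
  0 <= t -> 0 <= x < x' -> x' <= 1 -> two_gap_motion t x < two_gap_motion t x'.
Proof.
  intros Ht Hx Hx'.
  pose proof (time_at_A_decreasing x x' Hx Hx'). pose proof (time_at_B_decreasing x x' Hx Hx').
  destruct (Rle_lt_dec t (time_at_A x')) as [H1 | H1].
  { rewrite !two_gap_motion_first by lra. unfold uniform_motion. lra. }
  destruct (Rle_lt_dec t (time_at_A x)) as [H2 | H2].
  { pose proof (two_gap_motion_le_A x ltac:(lra) t ltac:(lra)).
    pose proof (two_gap_motion_gt_A x' ltac:(lra) t H1). lra. }
  destruct (Rle_lt_dec t (time_at_B x')) as [H3 | H3].
  { rewrite !two_gap_motion_second by lra.
    apply (increasing_of_pos_derive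
             (fun u => uniform_motion A (speed_at_A u) (time_at_A u) F2 t)
             (fun u => 1 + rate_before_B u * (t - time_at_A u)));
      [lra | intros z Hz; apply second_layer_derive; lra |].
    intros z Hz. assert (Hz' : 0 <= z <= 1) by lra.
    pose proof (stretch_at_B_pos z Hz' (rate_nonneg z Hz')) as Hg.
    rewrite stretch_at_B_eq in Hg by exact Hz'.
    pose proof (rate_before_B_neg z Hz').
    pose proof (decreasing_on_unit_le _ time_at_B_decreasing z x' ltac:(lra) Hx').
    nra. }
  destruct (Rle_lt_dec t (time_at_B x)) as [H4 | H4].
  { pose proof (two_gap_motion_le_B x ltac:(lra) t ltac:(lra)).
    pose proof (two_gap_motion_gt_B x' ltac:(lra) t H3). lra. }
  rewrite !two_gap_motion_third by lra.
  apply (increasing_of_pos_derive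
           (fun u => uniform_motion B (speed_at_B u) (time_at_B u) F3 t)
           (fun u => stretch_at_B u + rate_after_B u * (t - time_at_B u)));
    [lra | intros z Hz; apply third_layer_derive; lra |].
  intros z Hz. assert (Hz' : 0 <= z <= 1) by lra.
  pose proof (stretch_at_B_pos z Hz' (rate_nonneg z Hz')). pose proof (rate_nonneg z Hz').
  pose proof (decreasing_on_unit_le _ time_at_B_decreasing x z ltac:(lra) ltac:(lra)).
  nra.
Qed.

End Ordered.

Lemma two_gap_collision x0 :
  0 <= x0 <= 1 -> rate_after_B x0 < 0 -> ~ no_collisions two_gap_motion.
Proof.
  intros Hx0 Hc.
  apply (collision_of_negative_rate two_gap_motion
           (fun t z => uniform_motion B (speed_at_B z) (time_at_B z) F3 t)
           time_at_B x0 (stretch_at_B x0) (rate_after_B x0)); try assumption.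
  - intros z r Hz. unfold two_gap_motion.
    assert (Hmid : continuous (fun s => Rmax (Rmin s (time_at_B z)) (time_at_A z)) r)
      by (apply (continuous_comp (fun s => Rmin s (time_at_B z)) (fun s => Rmax s (time_at_A z)));
          [apply continuous_Rmin_l | apply continuous_Rmax_l]).
    apply (continuous_plus (fun s => _ + _) (fun s => _ - B));
      [apply (continuous_plus (fun s => _) (fun s => _ - A)) |].
    + apply continuous_uniform_motion_comp, continuous_Rmin_l.
    + apply (continuous_minus (fun s => _) (fun _ => A)); [|apply continuous_const].
      apply continuous_uniform_motion_comp, Hmid.
    + apply (continuous_minus (fun s => _) (fun _ => B)); [|apply continuous_const].
      apply continuous_uniform_motion_comp, continuous_Rmax_l.
  - intros z Hz. pose proof (time_at_A_pos z Hz).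
    rewrite two_gap_motion_first by lra. apply uniform_motion_start.
  - intros z Hz. pose proof (time_at_A_pos z Hz). pose proof (time_at_B_gt z Hz).
    split; [lra|]. eexists. apply time_at_B_derive, Hz.
  - intros z t Hz Ht. apply two_gap_motion_third; assumption.
  - intros t. apply third_layer_derive, Hx0.
Qed.

Lemma two_gap_no_collisions_iff y :
  is_trajectory (F_two_gaps F1 F2 F3 A B) (fun _ => 0) y ->
  no_collisions y <-> forall x, 0 <= x <= 1 -> 0 <= rate_after_B x.
Proof.
  intros Hy. rewrite (no_collisions_ext y two_gap_motion)
    by (intros; apply two_gap_trajectory; assumption).
  split.
  - intros NC x Hx. destruct (Rle_lt_dec 0 (rate_after_B x)) as [|Hc]; [assumption|].
    exfalso. exact (two_gap_collision x Hx Hc NC).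
  - intros Hc. apply no_collisions_of_increasing. intros.
    apply two_gap_motion_increasing; assumption.
Qed.

Lemma two_gap_no_collisions_criterion y :
  is_trajectory (F_two_gaps F1 F2 F3 A B) (fun _ => 0) y ->
  no_collisions y <-> B - A <= alpha F1 F2 F3 * (A - 1).
Proof.
  intros Hy. rewrite (two_gap_no_collisions_iff y Hy). split.
  - intros H. apply (rate_after_B_nonneg_iff 1), H; lra.
  - intros H x Hx. apply (rate_after_B_nonneg_iff x Hx).
    assert (0 < alpha F1 F2 F3) by (apply (Rmult_lt_reg_r (A - 1)); lra).
    nra.
Qed.

End TwoGaps.

Theorem theorem3 :
  (forall F1 F2 A : R, 0 < F1 -> 0 <= F2 -> 1 < A ->
    (forall y : R -> R -> R,
       is_trajectory (F_one_gap F1 F2 A) (fun _ => 0) y ->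
       (no_collisions y <-> F2 >= F1)) /\
    (forall v dv : R -> R,
       (forall x, 0 <= x <= 1 -> is_derive v x (dv x)) ->
       (forall x, 0 <= x <= 1 -> continuous dv x) ->
       (forall x, 0 <= x <= 1 -> 0 <= v x) ->
       forall y : R -> R -> R,
         is_trajectory (F_one_gap F1 F2 A) v y ->
         (no_collisions y <->
          (forall x, 0 <= x <= 1 ->
             -2 * (A - x) * dv x < v x + sqrt (Dfun F1 A v x) /\
             dv x * ((F1 - F2) * v x + F2 * sqrt (Dfun F1 A v x)) >= F1 * (F1 - F2))))) /\
  (forall F1 F2 F3 A B : R, 0 < F2 -> F2 < F1 -> F2 < F3 -> 1 < A -> A < B ->
    forall y : R -> R -> R,
      is_trajectory (F_two_gaps F1 F2 F3 A B) (fun _ => 0) y ->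
      (no_collisions y <-> B - A <= alpha F1 F2 F3 * (A - 1))).
Proof.
  split.
  - intros F1 F2 A HF1 HF2 HA. split.
    + intros y. apply one_gap_at_rest_no_collisions_iff; assumption.
    +
      intros v dv Hdv _ Hv. apply one_gap_no_collisions_criterion; assumption.
  - intros F1 F2 F3 A B HF2 HF12 HF23 HA HAB.
    apply two_gap_no_collisions_criterion; assumption.
Qed.
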